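(* In the restricted cut-and-choose setting described in the context, for every $\alpha\in\mathbb{R}$ and either choice of attack placement (before or after the delegated unitary), the overall acceptance probabilities satisfy $$|p_H-p_D^{\alpha}|\le \sqrt{1-\cos\!\left(\tfrac{\alpha}{2}\right)^{2N}}=\sqrt{1-\left(1-\sin\!\left(\tfrac{\alpha}{2}\right)^2\right)^{N}},$$ where $N=\sum_{n\ge 0} n\,\Omega(n)$ is the expected number of test rounds (assumed finite).
   Context: Restricted cut-and-choose setting. Fix $k\ge 1$ and let $\mathcal{X}=\mathbb{C}^{2^k}$. Let $P(\alpha)=\mathrm{diag}(1,e^{i\alpha})$ and $A_\alpha=\mathbb{1}_2^{\otimes(k-1)}\otimes P(\alpha)$ (phase rotation on the $k$-th qubit). Let $\Omega$ be a probability distribution on $\mathbb{N}=\{0,1,2,\dots\}$ (the number $n$ of test rounds), with finite mean $N=\sum_n n\,\Omega(n)$. For each $n\in\mathbb{N}$ and each round $i\in\{1,\dots,n+1\}$ there is a test (trap) unitary $T_{n,i}\in\mathrm{U}(\mathcal{X})$ and a test input unit vector $|\chi_{n,i}\rangle\in\mathcal{X}$; and for each $n$ a measurement operator $\mu_{k,n}$ on $\mathcal{X}^{\otimes n}$ with $0\le\mu_{k,n}\le \mathbb{1}$ (the ''accept'' outcome). The output round $\ell$ is uniform on $\{1,\dots,n+1\}$; all rounds $i\ne\ell$ are test rounds, and the round $\ell$ carries the client's computation. The phase attack with parameter $\alpha$ replaces each delegated unitary $T$ by $T^\alpha$, where either $T^\alpha=T A_\alpha$ for all rounds (attack before the unitary)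 or $T^\alpha=A_\alpha T$ for all rounds (attack after the unitary). Define $$p^H_{n,\ell}=\mathrm{Tr}\Big[\mu_{k,n}\bigotimes_{i\ne\ell} T_{n,i}|\chi_{n,i}\rangle\langle\chi_{n,i}|T_{n,i}^\dagger\Big],\qquad p^{D}_{n,\ell}=\mathrm{Tr}\Big[\mu_{k,n}\bigotimes_{i\ne\ell} T^\alpha_{n,i}|\chi_{n,i}\rangle\langle\chi_{n,i}|(T^\alpha_{n,i})^\dagger\Big],$$ (tensor products over $i\in\{1,\dots,n+1\}\setminus\{\ell\}$ in increasing order), and $$p_H=\sum_{n\ge0}\frac{\Omega(n)}{n+1}\sum_{\ell=1}^{n+1}p^H_{n,\ell},\qquad p_D^{\alpha}=\sum_{n\ge0}\frac{\Omega(n)}{n+1}\sum_{\ell=1}^{n+1}p^D_{n,\ell}.$$ *)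

From HB Require Import structures.
From mathcomp Require Import all_boot all_order all_algebra.
From mathcomp Require Import complex mxtens.
From mathcomp Require Import all_classical all_reals all_analysis.

Set Implicit Arguments.
Unset Strict Implicit.
Unset Printing Implicit Defensive.

Import Order.TTheory GRing.Theory Num.Theory.
Import numFieldNormedType.Exports.
Local Open Scope ring_scope.

Section Defs.
Variable R : realType.
Local Notation C := R[i].

Definition adj {m n} (A : 'M[C]_(m, n)) : 'M[C]_(n, m) := (map_mx Num.conj A)^T.

(* Loewner order:  A is positive semidefinite  iff  <v, A v> >= 0 for all v
   (in the order of C, 0 <= z means z is real and nonnegative). *)
Definition psdmx {n} (A : 'M[C]_n) : Prop :=
  forall v : 'cV[C]_n, 0 <= (adj v *m A *m v) 0 0.

Definition effect {n} (M : 'M[C]_n) : Prop := psdmx M /\ psdmx (1%:M - M).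

Definition unit_vec {n} (v : 'cV[C]_n) : Prop := adj v *m v = 1%:M.

Definition proj {n} (v : 'cV[C]_n) : 'M[C]_n := v *m adj v.

Fixpoint tens_pow {d} (m : nat) : ('I_m -> 'M[C]_d) -> 'M[C]_(d ^ m) :=
  match m return ('I_m -> 'M[C]_d) -> 'M[C]_(d ^ m) with
  | 0 => fun _ => 1%:M
  | m'.+1 => fun rho =>
      castmx (esym (expnS d m'), esym (expnS d m'))
        (tensmx (rho ord0) (tens_pow (fun j : 'I_m' => rho (lift ord0 j))))
  end.

Definition Pgate (a : R) : 'M[C]_2 :=
  \matrix_(i < 2, j < 2)
    (if (i == j) then (if i == 1 :> nat then (cos a +i* sin a)%C else 1) else 0).

(* A_alpha = 1_2^{(x)(k-1)} (x) P(alpha) on C^{2^k} (for k >= 1; the k = 0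
   branch is never used since the theorem assumes k >= 1). *)
Definition Aphase (k : nat) (a : R) : 'M[C]_(2 ^ k) :=
  match k return 'M[C]_(2 ^ k) with
  | 0 => 1%:M
  | k'.+1 => castmx (esym (expnSr 2 k'), esym (expnSr 2 k'))
               (tensmx (tens_pow (fun _ : 'I_k' => (1%:M : 'M[C]_2))) (Pgate a))
  end.

Definition attacked {d} (before : bool) (A T : 'M[C]_d) : 'M[C]_d :=
  if before then T *m A else A *m T.

(* p_{n,l} = Tr[ mu_n  (x)_{i <> l} U_{n,i} |chi_{n,i}><chi_{n,i}| U_{n,i}^dagger ],
   the tensor factors being the rounds i <> l in increasing order
   (lift l j enumerates {0..n} \ {l} increasingly for j : 'I_n). Rounds and l
   are 0-based here. The trace is real; we take its real part. *)
Definition acc_prob {d n} (mu : 'M[C]_(d ^ n)) (U : 'I_n.+1 -> 'M[C]_d)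
  (chi : 'I_n.+1 -> 'cV[C]_d) (l : 'I_n.+1) : R :=
  complex.Re (\tr (mu *m tens_pow (fun j : 'I_n =>
      U (lift l j) *m proj (chi (lift l j)) *m adj (U (lift l j))))).

Definition overall_prob (Omega : nat -> R) (f : forall n : nat, 'I_n.+1 -> R) : R :=
  limn (series ((fun n => Omega n / n.+1%:R * \sum_(l < n.+1) f n l) : R^nat)).

End Defs.

(* For fixed n and output round l, both acceptance probabilities are expectations
   <psi|mu|psi> and <phi|mu|phi> of one effect 0 <= mu <= 1 in two product states.
   Polarization with x - y, x + y and Cauchy-Schwarz for mu and 1 - mu bound their
   difference by sqrt (1 - |<psi|phi>|^2).  The overlap factorizes over the n test
   rounds, and in each round the diagonal phase gate keeps |<x|A x>|^2 above
   c = cos (alpha/2)^2, so the gap is at most sqrt (1 - c^n).  Averaging over Omega,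
   Jensen for the concave square root and for the convex map t |-> c^t turns
   sum_n Omega(n) sqrt (1 - c^n) into sqrt (1 - c^N). *)

From Pilot Require Import Defs.
From HB Require Import structures.
From mathcomp Require Import all_boot all_order all_algebra.
From mathcomp Require Import complex mxtens.
From mathcomp Require Import all_classical all_reals all_analysis.
From mathcomp Require Import ring lra.

Set Implicit Arguments.
Unset Strict Implicit.
Unset Printing Implicit Defensive.

Import Order.TTheory GRing.Theory Num.Theory.
Import numFieldNormedType.Exports.
Local Open Scope ring_scope.
Local Open Scope classical_set_scope.

Section JensenSeries.
Variable R : realType.
Implicit Types (u v w x : R^nat) (c : R).

Lemma lim_series_ge0 u : (forall n, 0 <= u n) -> cvgn (series u) ->
  0 <= limn (series u).
Proof.
move=> u0 cu; apply: limr_ge => //; apply: nearW => n.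
by apply: sumr_ge0 => i _.
Qed.

Lemma is_cvg_series_bounded u v : (forall n, 0 <= u n <= v n) ->
  cvgn (series v) -> cvgn (series u).
Proof.
move=> uv; apply: series_le_cvg => n; case/andP: (uv n) => // u0 /(le_trans u0) //.
Qed.

Lemma norm_lim_seriesB_le u v w : (forall n, `|u n - v n| <= w n) ->
  cvgn (series u) -> cvgn (series v) -> cvgn (series w) ->
  `|limn (series u) - limn (series v)| <= limn (series w).
Proof.
move=> uvw cu cv cw; have cuv := is_cvg_seriesB cu cv.
have /all_and2[lo hi] n : - w n <= u n - v n /\ u n - v n <= w n.
  by move: (uvw n); rewrite ler_norml => /andP.
rewrite -lim_seriesB // ler_norml -lim_seriesN //.
by rewrite !lim_series_le ?is_cvg_seriesN.
Qed.

Lemma sqrt_le_mean (x y : R) : 0 <= x -> 0 < y ->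
  Num.sqrt x <= (x + y) / (2 * Num.sqrt y).
Proof.
move=> x0 y0; have sy : 0 < Num.sqrt y by rewrite sqrtr_gt0.
rewrite ler_pdivlMr ?mulr_gt0 //.
rewrite -{2}(sqr_sqrtr x0) -{2}(sqr_sqrtr (ltW y0)).
have := sqr_ge0 (Num.sqrt x - Num.sqrt y); nra.
Qed.

Lemma lim_series_sqrt_le w x : (forall n, 0 <= w n) -> series w @ \oo --> (1 : R) ->
  (forall n, 0 <= x n) -> cvgn (series (fun n => w n * x n)) ->
  cvgn (series (fun n => w n * Num.sqrt (x n))) ->
  limn (series (fun n => w n * Num.sqrt (x n))) <=
    Num.sqrt (limn (series (fun n => w n * x n))).
Proof.
move=> w0 w1 x0 cwx cS; have cw := cvgP _ w1.
have lim_w : limn (series w) = 1 by apply: cvg_lim.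
set S := limn (series _); set X := limn (series _).
have X0 : 0 <= X by apply: lim_series_ge0 => // n; rewrite mulr_ge0.
(* Sum the tangent-line bound [sqrt t <= (t + y) / (2 sqrt y)] against [w]. *)
have S_le y : 0 < y -> S <= (X + y) / (2 * Num.sqrt y).
  move=> y0; have sy : 0 < Num.sqrt y by rewrite sqrtr_gt0.
  pose f := (2 * Num.sqrt y)^-1 *: ((fun n => w n * x n) + y *: w).
  have cwy : cvgn (series (y *: w)) by apply: is_cvg_seriesZ.
  have cg : cvgn (series ((fun n => w n * x n) + y *: w)) by apply: is_cvg_seriesD.
  have cf : cvgn (series f) by apply: is_cvg_seriesZ.
  have -> : (X + y) / (2 * Num.sqrt y) = limn (series f).
    rewrite lim_seriesZ // lim_seriesD // lim_seriesZ // lim_w -/X.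
    by rewrite [y%:A]mulr1 mulrC.
  rewrite /S; apply: (@lim_series_le R) => // n; rewrite /f !fctE.
  apply: le_trans (ler_wpM2l (w0 n) (sqrt_le_mean (x0 n) y0)) _.
  rewrite [leRHS](_ : _ = w n * ((x n + y) / (2 * Num.sqrt y))) //.
  change ((2 * Num.sqrt y)^-1 * (w n * x n + y * w n) =
          w n * ((x n + y) / (2 * Num.sqrt y))).
  by field; lra.
have [X_gt0|] := ltP 0 X.
  apply: le_trans (S_le _ X_gt0) _.
  have sX : 0 < Num.sqrt X by rewrite sqrtr_gt0.
  by rewrite -{1 2}(sqr_sqrtr X0) [leLHS](_ : _ = Num.sqrt X) //; field; lra.
move=> X_le0; have X_eq0 : X = 0 by apply/le_anti; rewrite X_le0 X0.
rewrite X_eq0 sqrtr0; case: (leP S 0) => // S_gt0.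
have := S_le _ (exprn_gt0 2 S_gt0).
rewrite X_eq0 add0r sqrtr_sqr gtr0_norm // (_ : S ^+ 2 / (2 * S) = S / 2); last by field; lra.
lra.
Qed.

Lemma powR_ge_tangent c (s t : R) : 0 < c ->
  c `^ s * (1 + (t - s) * ln c) <= c `^ t.
Proof.
move=> c0; rewrite /powR gt_eqF // [t * _](_ : _ = s * ln c + (t - s) * ln c).
  by rewrite expRD ler_wpM2l ?expR_ge0 ?expR_ge1Dx.
by rewrite mulrBl addrC subrK.
Qed.

Lemma powR_lim_series_le w c : (forall n, 0 <= w n) -> series w @ \oo --> (1 : R) ->
  cvgn (series (fun n => n%:R * w n)) -> 0 <= c ->
  cvgn (series (fun n => w n * c ^+ n)) ->
  c `^ limn (series (fun n => n%:R * w n)) <= limn (series (fun n => w n * c ^+ n)).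
Proof.
move=> w0 w1 cnw c0 cwc; have cw := cvgP _ w1.
have lim_w : limn (series w) = 1 by apply: cvg_lim.
set N := limn (series (fun n => _ * w n)).
have [c_eq0|c_neq0] := eqVneq c 0.
  rewrite c_eq0 in cwc *.
  have [N_eq0|N_neq0] := eqVneq N 0; last first.
    rewrite powR0 //; apply: lim_series_ge0 => // n.
    by rewrite /= mulr_ge0 ?exprn_ge0.
  (* Here [w - n w] sums to [1 - N = 1] and lies termwise below [w n * 0 ^+ n]. *)
  have cwnw : cvgn (series (w - (fun n => n%:R * w n))) by apply: is_cvg_seriesB.
  have lim_wnw : limn (series (w - (fun n => n%:R * w n))) = 1.
    by rewrite lim_seriesB // lim_w -/N N_eq0 subr0.
  rewrite N_eq0 powRr0 -lim_wnw; apply: lim_series_le => // -[|n]; rewrite !fctE.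
    by rewrite mul0r subr0 expr0 mulr1.
  by rewrite expr0n mulr0 subr_le0 -{1}[w n.+1]mul1r ler_wpM2r // ler1n.
have c_gt0 : 0 < c by rewrite lt_def c_neq0.
set E := c `^ N; pose L := ln c.
pose tangent := (E * (1 - N * L)) *: w + (E * L) *: (fun n => n%:R * w n).
have ct : cvgn (series tangent) by apply: is_cvg_seriesD; apply: is_cvg_seriesZ.
have <- : limn (series tangent) = E.
  rewrite lim_seriesD; try by apply: is_cvg_seriesZ.
  rewrite !lim_seriesZ // lim_w -/N.
  by change (E * (1 - N * L) * 1 + E * L * N = E); ring.
apply: lim_series_le => // n; rewrite -powR_mulrn //.
have := powR_ge_tangent N n%:R c_gt0; rewrite -/E -/L => tangent_le.
change (E * (1 - N * L) * w n + E * L * (n%:R * w n) <= w n * c `^ n%:R).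
rewrite [leLHS](_ : _ = w n * (E * (1 + (n%:R - N) * L))); last by ring.
by rewrite ler_wpM2l.
Qed.

Lemma lim_series_gap_le w u v c : (forall n, 0 <= w n) ->
  series w @ \oo --> (1 : R) -> cvgn (series (fun n => n%:R * w n)) ->
  0 <= c <= 1 -> (forall n, 0 <= u n <= w n) -> (forall n, 0 <= v n <= w n) ->
  (forall n, `|u n - v n| <= w n * Num.sqrt (1 - c ^+ n)) ->
  `|limn (series u) - limn (series v)| <=
    Num.sqrt (1 - c `^ limn (series (fun n => n%:R * w n))).
Proof.
move=> w0 w1 cnw /andP[c0 c1] uw vw uv; have cw := cvgP _ w1.
have lim_w : limn (series w) = 1 by apply: cvg_lim.
have cvg_le f : (forall n, 0 <= f n <= w n) -> cvgn (series f).
  by move=> fw; apply: is_cvg_series_bounded fw cw.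
have /all_and2[cn0 cn1] n : 0 <= c ^+ n /\ c ^+ n <= 1.
  by rewrite exprn_ge0 ?exprn_ile1.
have cwc : cvgn (series (fun n => w n * c ^+ n)).
  by apply: cvg_le => n; rewrite mulr_ge0 ?ler_piMr.
have cwx : cvgn (series (fun n => w n * (1 - c ^+ n))).
  by apply: cvg_le => n; rewrite mulr_ge0 ?ler_piMr ?subr_ge0 ?gerBl.
have cws : cvgn (series (fun n => w n * Num.sqrt (1 - c ^+ n))).
  apply: cvg_le => n; rewrite mulr_ge0 ?sqrtr_ge0 ?ler_piMr //.
  by rewrite -[leRHS]sqrtr1 ler_sqrt // gerBl.
apply: le_trans (norm_lim_seriesB_le uv (cvg_le _ uw) (cvg_le _ vw) cws) _.
apply: le_trans (lim_series_sqrt_le w0 w1 _ cwx cws) _.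
  by move=> n; rewrite subr_ge0.
have -> : limn (series (fun n => w n * (1 - c ^+ n))) =
          1 - limn (series (fun n => w n * c ^+ n)).
  have -> : (fun n => w n * (1 - c ^+ n)) = w - (fun n => w n * c ^+ n).
    by apply/funext => n; rewrite !fctE mulrBr mulr1.
  by rewrite lim_seriesB // lim_w.
have Jensen_pow := powR_lim_series_le w0 w1 cnw c0 cwc.
rewrite ler_sqrt ?lerD2l ?lerN2 // subr_ge0 -[leRHS]lim_w.
apply: le_trans Jensen_pow _.
by apply: lim_series_le => // n; rewrite ler_piMr.
Qed.
End JensenSeries.

Section TensorProducts.
Variable R : realType.
Local Notation C := R[i].

(* [tens_pow] with rectangular factors, so that it also tensors column vectors. *)
Fixpoint tens_prod {d p : nat} (m : nat) :
    ('I_m -> 'M[C]_(d, p)) -> 'M[C]_(d ^ m, p ^ m) :=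
  match m return ('I_m -> 'M[C]_(d, p)) -> 'M[C]_(d ^ m, p ^ m) with
  | 0 => fun _ => 1%:M
  | m'.+1 => fun A =>
      castmx (esym (expnS d m'), esym (expnS p m'))
        (A ord0 *t tens_prod (fun j : 'I_m' => A (lift ord0 j)))
  end.

Lemma tens_powE d m (A : 'I_m -> 'M[C]_d) : tens_pow A = tens_prod A.
Proof. by elim: m A => //= m IH A; rewrite IH. Qed.

Lemma castmx_mulmx m m' n n' p p' (em : m = m') (en : n = n') (ep : p = p')
    (A : 'M[C]_(m, n)) (B : 'M[C]_(n, p)) :
  castmx (em, en) A *m castmx (en, ep) B = castmx (em, ep) (A *m B).
Proof. by subst. Qed.

Lemma adjmxE m n (A : 'M[C]_(m, n)) i j : adj A i j = (A j i)^*.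
Proof. by rewrite !mxE. Qed.

Lemma adjmxK m n (A : 'M[C]_(m, n)) : adj (adj A) = A.
Proof. by apply/matrixP => i j; rewrite !adjmxE conjCK. Qed.

Lemma adjmxM m n p (A : 'M[C]_(m, n)) (B : 'M[C]_(n, p)) :
  adj (A *m B) = adj B *m adj A.
Proof. by rewrite /adj map_mxM trmx_mul. Qed.

Lemma adjmxD m n (A B : 'M[C]_(m, n)) : adj (A + B) = adj A + adj B.
Proof. by rewrite /adj map_mxD linearD. Qed.

Lemma adjmxN m n (A : 'M[C]_(m, n)) : adj (- A) = - adj A.
Proof. by rewrite /adj map_mxN linearN. Qed.

Lemma adjmxZ m n c (A : 'M[C]_(m, n)) : adj (c *: A) = c^* *: adj A.
Proof. by rewrite /adj map_mxZ linearZ. Qed.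

Lemma adjmx_castmx m m' n n' (em : m = m') (en : n = n') (A : 'M[C]_(m, n)) :
  adj (castmx (em, en) A) = castmx (en, em) (adj A).
Proof. by subst; rewrite !castmx_id. Qed.

Lemma adjmx_tensmx m n p q (A : 'M[C]_(m, n)) (B : 'M[C]_(p, q)) :
  adj (A *t B) = adj A *t adj B.
Proof. by rewrite /adj (map_mxT Num.conj) trmx_tens. Qed.

Lemma tens_prodM d p q m (A : 'I_m -> 'M[C]_(d, p)) (B : 'I_m -> 'M[C]_(p, q)) :
  tens_prod A *m tens_prod B = tens_prod (fun j => A j *m B j).
Proof.
elim: m A B => [|m IH] A B /=; first by rewrite mulmx1.
by rewrite castmx_mulmx tensmx_mul IH.
Qed.

Lemma adjmx_tens_prod d p m (A : 'I_m -> 'M[C]_(d, p)) :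
  adj (tens_prod A) = tens_prod (fun j => adj (A j)).
Proof.
elim: m A => [|m IH] A /=.
  by apply/matrixP => i j; rewrite adjmxE !mxE conjC_nat (ord1 i) (ord1 j).
by rewrite adjmx_castmx adjmx_tensmx IH.
Qed.

Lemma tens_prod_mx11 m (z : 'I_m -> 'M[C]_1) i j :
  tens_prod z i j = \prod_(k < m) z k 0 0.
Proof.
elim: m z i j => [|m IH] z i j /=; first by rewrite big_ord0 !ord1 mxE.
by rewrite castmxE mxE IH big_ord_recl !ord1.
Qed.

Lemma tensmx1 m n : (1%:M : 'M[C]_m) *t (1%:M : 'M[C]_n) = 1%:M.
Proof.
apply/matrixP => i j.
case: (mxtens_indexP i) => i1 i2; case: (mxtens_indexP j) => j1 j2.
rewrite tensmxE !mxE (inj_eq (can_inj (@mxtens_indexK _ _))) xpair_eqE.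
by case: (i1 == j1); case: (i2 == j2); rewrite ?mulr1 ?mulr0 ?mul0r.
Qed.

Lemma tens_prod1 d m : tens_prod (fun _ : 'I_m => (1%:M : 'M[C]_d)) = 1%:M.
Proof.
elim: m => //= m ->; rewrite tensmx1.
by case: _ / (esym (expnS d m)); rewrite castmx_id.
Qed.

End TensorProducts.

Section AcceptanceGap.
Variable R : realType.
Local Notation C := R[i].
Local Notation Re := (@complex.Re R).
Local Notation Im := (@complex.Im R).

Definition braket n (M : 'M[C]_n) (x y : 'cV[C]_n) : C := (adj x *m M *m y) 0 0.

Section BraketAlgebra.
Variable n : nat.
Implicit Types (M : 'M[C]_n) (x y z : 'cV[C]_n).

Lemma braketDl M x y z : braket M (x + y) z = braket M x z + braket M y z.
Proof. by rewrite /braket adjmxD !mulmxDl mxE. Qed.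

Lemma braketDr M x y z : braket M x (y + z) = braket M x y + braket M x z.
Proof. by rewrite /braket !mulmxDr mxE. Qed.

Lemma braketNl M x y : braket M (- x) y = - braket M x y.
Proof. by rewrite /braket adjmxN !mulNmx mxE. Qed.

Lemma braketNr M x y : braket M x (- y) = - braket M x y.
Proof. by rewrite /braket !mulmxN mxE. Qed.

Lemma braketZl M c x y : braket M (c *: x) y = c^* * braket M x y.
Proof. by rewrite /braket adjmxZ -!scalemxAl mxE. Qed.

Lemma braketZr M c x y : braket M x (c *: y) = c * braket M x y.
Proof. by rewrite /braket -!scalemxAr mxE. Qed.

Lemma braket1B M x y : braket (1%:M - M) x y = braket 1%:M x y - braket M x y.
Proof. by rewrite /braket mulmxBr mulmxBl !mxE. Qed.

Lemma braket1C x y : braket 1%:M y x = (braket 1%:M x y)^*.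
Proof. by rewrite /braket !mulmx1 -adjmxE adjmxM adjmxK. Qed.

End BraketAlgebra.

Lemma ReD (a b : C) : Re (a + b) = Re a + Re b. Proof. by case: a b => ? ? []. Qed.
Lemma ReN (a : C) : Re (- a) = - Re a. Proof. by case: a. Qed.
Lemma ReB (a b : C) : Re (a - b) = Re a - Re b. Proof. by rewrite ReD ReN. Qed.
Lemma ReMn (a : C) k : Re (a *+ k) = Re a *+ k.
Proof. by elim: k => // k IH; rewrite !mulrS ReD IH. Qed.
Lemma ReJ (a : C) : Re a^* = Re a. Proof. by case: a. Qed.
Lemma ReMc (t : R) (z : C) : Re (t%:C%C * z) = t * Re z.
Proof. by case: z => a b /=; rewrite mul0r subr0. Qed.

Lemma ImD (a b : C) : Im (a + b) = Im a + Im b. Proof. by case: a b => ? ? []. Qed.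
Lemma ImMc (t : R) (z : C) : Im (t%:C%C * z) = t * Im z.
Proof. by case: z => a b /=; rewrite mul0r addr0. Qed.

Lemma psd_Re_braket_ge0 m (B : 'M[C]_m) v : psdmx B -> 0 <= Re (braket B v v).
Proof. by move=> /(_ v); rewrite lecE => /andP[]. Qed.

Lemma quadratic_ge0_discr (a b c : R) : 0 <= b ->
  (forall t, 0 <= a + t * c + t ^+ 2 * b) -> c ^+ 2 <= 4 * a * b.
Proof.
move=> b0 q_ge0; have := q_ge0 0; rewrite mul0r expr0n /= mul0r !addr0 => a0.
have [b_eq0|b_neq0] := eqVneq b 0.
  have [->|c_neq0] := eqVneq c 0; first by rewrite expr0n /= b_eq0 mulr0.
  by have := q_ge0 (- (a + 1) / c); rewrite b_eq0 mulr0 addr0 divfK //; lra.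
have b_gt0 : 0 < b by rewrite lt_def b_neq0.
have := q_ge0 (- c / (2 * b)).
rewrite [leRHS](_ : _ = a - c ^+ 2 / (4 * b)); last by field; lra.
by rewrite subr_ge0 ler_pdivrMr; lra.
Qed.

Lemma psd_braket_CauchySchwarz m (B : 'M[C]_m) (u v : 'cV[C]_m) : psdmx B ->
  Re (braket B u v + braket B v u) ^+ 2 <= 4 * Re (braket B u u) * Re (braket B v v).
Proof.
move=> B_psd; apply: quadratic_ge0_discr => [|t]; first exact: psd_Re_braket_ge0.
have := psd_Re_braket_ge0 (u + t%:C%C *: v) B_psd.
rewrite braketDl !braketDr !braketZl !braketZr (conjc_real t : (t%:C%C : C)^* = _).
rewrite !ReD !ReMc => /le_trans; apply.
by rewrite le_eqVlt; apply/predU1P; left; ring.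
Qed.

Lemma braket_polar n (B : 'M[C]_n) (x y : 'cV[C]_n) :
  braket B (x - y) (x + y) + braket B (x + y) (x - y) =
    (braket B x x - braket B y y) *+ 2.
Proof. by rewrite !(braketDl, braketDr, braketNl, braketNr) mulr2n; ring. Qed.

Lemma mul4_le_mulDD (a b a' b' p : R) : 0 <= a -> 0 <= b -> 0 <= a' -> 0 <= b' ->
  0 <= p -> p <= a * b -> p <= a' * b' -> 4 * p <= (a + a') * (b + b').
Proof.
move=> a0 b0 a'0 b'0 p0 pab pa'b'.
suff : 2 * p <= a * b' + a' * b by nra.
have : p ^+ 2 <= (a * b') * (a' * b).
  by rewrite [leRHS](_ : _ = (a * b) * (a' * b')) ?ler_pM //; ring.
have := sqr_ge0 (a * b' - a' * b).
have : 0 <= a * b' + a' * b by rewrite addr_ge0 ?mulr_ge0.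
move: (a * b') (a' * b) => u v uv0 sq uv.
have : (2 * p) ^+ 2 <= (u + v) ^+ 2 by nra.
by rewrite ler_sqr ?nnegrE //; lra.
Qed.

Lemma effect_gap_Re_le m (M : 'M[C]_m) (x y : 'cV[C]_m) : effect M ->
  braket 1%:M x x = 1 -> braket 1%:M y y = 1 ->
  (Re (braket M x x) - Re (braket M y y)) ^+ 2 <= 1 - Re (braket 1%:M x y) ^+ 2.
Proof.
case=> M_psd M1_psd x1 y1; set r := Re (braket 1%:M x y).
have Re_dd : Re (braket 1%:M (x - y) (x - y)) = 2 - r *+ 2.
  rewrite !(braketDl, braketDr, braketNl, braketNr) x1 y1 (braket1C x y).
  by rewrite !(ReD, ReN, ReJ) -/r -[Re 1]/1; ring.
have Re_ss : Re (braket 1%:M (x + y) (x + y)) = 2 + r *+ 2.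
  rewrite !(braketDl, braketDr) x1 y1 (braket1C x y).
  by rewrite !(ReD, ReJ) -/r -[Re 1]/1; ring.
(* Cauchy-Schwarz for M and for 1 - M on the pair (x - y, x + y), whose
   polarization recovers the gap X. *)
have CS_M := psd_braket_CauchySchwarz (x - y) (x + y) M_psd.
have CS_1M := psd_braket_CauchySchwarz (x - y) (x + y) M1_psd.
have a0 := psd_Re_braket_ge0 (x - y) M_psd.
have b0 := psd_Re_braket_ge0 (x + y) M_psd.
have a'0 := psd_Re_braket_ge0 (x - y) M1_psd.
have b'0 := psd_Re_braket_ge0 (x + y) M1_psd.
rewrite !braket_polar !braket1B x1 y1 !(ReB, ReMn) Re_dd Re_ss in CS_M CS_1M a'0 b'0.
move: CS_M CS_1M a0 b0 a'0 b'0; set X := Re (braket M x x) - _.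
move: (Re (braket M (x - y) _)) (Re (braket M (x + y) _)) => a b.
rewrite -[Re 1]/1 => CS_M CS_1M a0 b0 a'0 b'0.
have XM : X ^+ 2 <= a * b by move: CS_M; rewrite mulr2n; nra.
have XM' : X ^+ 2 <= (2 - r *+ 2 - a) * (2 + r *+ 2 - b).
  by move: CS_1M; rewrite /X !mulr2n; nra.
have := mul4_le_mulDD a0 b0 a'0 b'0 (sqr_ge0 X) XM XM'.
by rewrite !mulr2n; nra.
Qed.

Definition sqnormc (z : C) : R := Re z ^+ 2 + Im z ^+ 2.

Lemma sqnormc_ge0 z : 0 <= sqnormc z.
Proof. by rewrite addr_ge0 ?sqr_ge0. Qed.

Lemma sqnormc1 : sqnormc 1 = 1.
Proof. by rewrite /sqnormc /= expr1n expr0n addr0. Qed.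

Lemma sqnormcM (z w : C) : sqnormc (z * w) = sqnormc z * sqnormc w.
Proof. by case: z w => ? ? [? ?]; rewrite /sqnormc /=; ring. Qed.

Lemma conjcM_sqnormc (z : C) : z^* * z = (sqnormc z)%:C%C.
Proof.
case: z => a b; apply/eqP; rewrite eq_complex /sqnormc /=.
by apply/andP; split; apply/eqP; ring.
Qed.

Lemma exists_phase_align (z : C) :
  exists w : C, w^* * w = 1 /\ Re (w * z) ^+ 2 = sqnormc z.
Proof.
have [z0|z_neq0] := eqVneq (sqnormc z) 0.
  exists 1; rewrite conjC1 mulr1 mul1r; split=> //.
  move: z0; case: z => a b; rewrite /sqnormc /= => z0.
  by have := sqr_ge0 a; have := sqr_ge0 b; lra.
have z_gt0 : 0 < sqnormc z by rewrite lt_def z_neq0 sqnormc_ge0.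
set n := Num.sqrt (sqnormc z).
have n_gt0 : 0 < n by rewrite sqrtr_gt0.
have n2 : n ^+ 2 = sqnormc z by rewrite sqr_sqrtr // sqnormc_ge0.
exists ((n^-1)%:C%C * z^*); split.
  rewrite rmorphM /= conjCK (conjc_real _ : ((n^-1)%:C%C : C)^* = _).
  rewrite mulrACA [z * _]mulrC conjcM_sqnormc -!rmorphM /= -n2.
  by apply/eqP; rewrite eq_complex /= eqxx andbT; apply/eqP; field; lra.
rewrite -mulrA conjcM_sqnormc -rmorphM /= -n2.
by field; lra.
Qed.

Lemma effect_gap_le m (M : 'M[C]_m) (x y : 'cV[C]_m) : effect M ->
  braket 1%:M x x = 1 -> braket 1%:M y y = 1 ->
  `|Re (braket M x x) - Re (braket M y y)| <= Num.sqrt (1 - sqnormc (braket 1%:M x y)).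
Proof.
move=> M_eff x1 y1; have [w [w1 wxy]] := exists_phase_align (braket 1%:M x y).
have wy1 : braket 1%:M (w *: y) (w *: y) = 1 by rewrite braketZl braketZr y1 mulr1.
have := effect_gap_Re_le M_eff x1 wy1.
rewrite braketZl braketZr mulrA w1 mul1r braketZr wxy => gap.
by rewrite -sqrtr_sqr ler_sqrt // (le_trans _ gap) ?sqr_ge0.
Qed.

Definition tens_vec d n (a : 'I_n -> 'cV[C]_d) : 'cV[C]_(d ^ n) :=
  castmx (erefl, exp1n n) (tens_prod a).

Lemma braket1_tens_vec d n (a b : 'I_n -> 'cV[C]_d) :
  braket 1%:M (tens_vec a) (tens_vec b) = \prod_(j < n) braket 1%:M (a j) (b j).
Proof.
rewrite /braket mulmx1 adjmx_castmx castmx_mulmx adjmx_tens_prod tens_prodM.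
by rewrite castmxE tens_prod_mx11; apply: eq_bigr => j _; rewrite mulmx1.
Qed.

Lemma tens_prod_proj d n (a : 'I_n -> 'cV[C]_d) :
  tens_prod (fun j => Defs.proj (a j)) = Defs.proj (tens_vec a).
Proof.
by rewrite /Defs.proj adjmx_castmx castmx_mulmx castmx_id adjmx_tens_prod tens_prodM.
Qed.

Lemma acc_prob_braket d n (mu : 'M[C]_(d ^ n)) (U : 'I_n.+1 -> 'M[C]_d)
    (chi : 'I_n.+1 -> 'cV[C]_d) l :
  let psi := tens_vec (fun j => U (lift l j) *m chi (lift l j)) in
  acc_prob mu U chi l = Re (braket mu psi psi).
Proof.
rewrite /acc_prob tens_powE.
have -> : (fun j : 'I_n => U (lift l j) *m Defs.proj (chi (lift l j)) *m adj (U (lift l j)))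
    = fun j => Defs.proj (U (lift l j) *m chi (lift l j)).
  by apply/funext => j; rewrite /Defs.proj adjmxM !mulmxA.
rewrite tens_prod_proj /Defs.proj mulmxA mxtrace_mulC /mxtrace big_ord1.
by rewrite mulmxA.
Qed.

Local Notation expi a := (cos a +i* sin a)%C.

Lemma Aphase_diagE k (a : R) : (0 < k)%N -> exists b : 'I_(2 ^ k) -> bool,
  forall i j, Aphase k a i j = (i == j)%:R * (if b i then expi a else 1).
Proof.
case: k => [//|k] _ /=; rewrite tens_powE tens_prod1.
pose e := esym (esym (expnSr 2 k)).
exists (fun i => (mxtens_unindex (cast_ord e i)).2 == 1 :> nat) => i j.
rewrite castmxE !mxE -/e.
have -> : (i == j) = (mxtens_unindex (cast_ord e i) == mxtens_unindex (cast_ord e j)).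
  by rewrite (inj_eq (can_inj (@mxtens_unindexK _ _))) (inj_eq (@cast_ord_inj _ _ _)).
case: (mxtens_unindex _) => i1 i2; case: (mxtens_unindex _) => j1 j2.
rewrite xpair_eqE.
by case: (i1 == j1); case: (i2 =P j2) => [->|] /=; rewrite ?mul1r ?mul0r ?mulr0.
Qed.

Lemma braket1_diag n (w : 'I_n -> C) (A : 'M[C]_n) (x : 'cV[C]_n) :
  (forall i j, A i j = (i == j)%:R * w i) ->
  braket 1%:M x (A *m x) = \sum_i (sqnormc (x i 0))%:C%C * w i.
Proof.
move=> AE; rewrite /braket mulmx1 mxE; apply: eq_bigr => i _.
rewrite !mxE (bigD1 i) //= big1 => [|j ji]; last by rewrite AE eq_sym (negbTE ji) !mul0r.
by rewrite AE eqxx mul1r addr0 mulrCA conjcM_sqnormc mulrC.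
Qed.

Lemma Aphase_unitary k (a : R) : (0 < k)%N -> Aphase k a \is unitarymx.
Proof.
move=> k_gt0; have [b AE] := Aphase_diagE a k_gt0.
apply/unitarymxP/matrixP => i j; rewrite !mxE.
rewrite (bigD1 i) //= big1 => [|l li]; last by rewrite AE eq_sym (negbTE li) !mul0r.
rewrite addr0 !mxE !AE eqxx mul1r; have [<-|ij] := eqVneq i j; last first.
  by rewrite mul0r rmorph0 mulr0.
rewrite mul1r; case: (b i); last by rewrite conjC1 mulr1.
by rewrite mulrC conjcM_sqnormc /sqnormc /= cos2Dsin2.
Qed.

(* If [p] is the weight of [x] on the rotated subspace, then
   [<x|A x> = (1 - p) + p e^(i a)], whose squared modulus is
   [1 - 4 p (1 - p) sin (a / 2) ^+ 2 >= cos (a / 2) ^+ 2]. *)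
Lemma Aphase_fidelity_ge k (a : R) (x : 'cV[C]_(2 ^ k)) : (0 < k)%N ->
  braket 1%:M x x = 1 -> cos (a / 2) ^+ 2 <= sqnormc (braket 1%:M x (Aphase k a *m x)).
Proof.
move=> k_gt0 x1; have [b AE] := Aphase_diagE a k_gt0; rewrite (braket1_diag _ AE).
have sum1 : braket 1%:M x (1%:M *m x) = \sum_i (sqnormc (x i 0))%:C%C * 1.
  by apply: braket1_diag => i j; rewrite !mxE mulr1.
rewrite mul1mx x1 in sum1.
pose p i := sqnormc (x i 0).
pose P1 := \sum_i (if b i then p i else 0); pose P0 := \sum_i (if b i then 0 else p i).
have P1_ge0 : 0 <= P1 by apply: sumr_ge0 => i _; case: (b i); rewrite ?sqnormc_ge0.
have P0_ge0 : 0 <= P0 by apply: sumr_ge0 => i _; case: (b i); rewrite ?sqnormc_ge0.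
have P01 : P0 + P1 = 1.
  rewrite -[RHS]/(Re 1) sum1 (big_morph Re ReD (erefl : Re 0 = 0)) -big_split.
  by apply: eq_bigr => i _; rewrite mulr1 /=; case: (b i); rewrite ?addr0 ?add0r.
have -> : sqnormc (\sum_i (p i)%:C%C * (if b i then expi a else 1)) =
          (P0 + P1 * cos a) ^+ 2 + (P1 * sin a) ^+ 2.
  rewrite /sqnormc (big_morph Re ReD (erefl : Re 0 = 0)).
  rewrite (big_morph Im ImD (erefl : Im 0 = 0)) /P0 /P1 !mulr_suml -big_split /=.
  congr (_ ^+ 2 + _ ^+ 2); apply: eq_bigr => i _; rewrite ?ReMc ?ImMc;
    by case: (b i); rewrite /= ?mul0r ?add0r ?mulr1 ?addr0 ?mulr0.
have cos_a : cos a = cos (a / 2) ^+ 2 *+ 2 - 1 by rewrite -cos_mulr2n mulr2n -splitr.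
have := cos2Dsin2 a; have := cos2Dsin2 (a / 2); have := sqr_ge0 (sin (a / 2)).
have : 4 * (P0 * P1) <= 1 by have := sqr_ge0 (P0 - P1); nra.
rewrite mulr2n in cos_a; nra.
Qed.

Lemma unitarymx_adjmxM d (U : 'M[C]_d) : U \is unitarymx -> adj U *m U = 1%:M.
Proof.
move=> U_unitary; have := spectral.mulmxKtV (1%:M : 'M[C]_d) U_unitary erefl.
by rewrite mul1mx -map_trmx.
Qed.

Lemma braket1_unitary d (U : 'M[C]_d) (x y : 'cV[C]_d) : U \is unitarymx ->
  braket 1%:M (U *m x) (U *m y) = braket 1%:M x y.
Proof.
move=> U_unitary; rewrite /braket !mulmx1 adjmxM !mulmxA.
by rewrite -[adj x *m adj U *m U]mulmxA unitarymx_adjmxM // mulmx1.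
Qed.

Lemma unit_vec_braket1 d (x : 'cV[C]_d) : unit_vec x -> braket 1%:M x x = 1.
Proof. by rewrite /unit_vec /braket mulmx1 => ->; rewrite mxE. Qed.

Lemma attacked_unitary k (a : R) before (U : 'M[C]_(2 ^ k)) : (0 < k)%N ->
  U \is unitarymx -> attacked before (Aphase k a) U \is unitarymx.
Proof.
by move=> k_gt0 U_unitary; case: before; rewrite mul_unitarymx ?Aphase_unitary.
Qed.

Lemma tens_vec_unit d n (V : 'I_n -> 'M[C]_d) (x : 'I_n -> 'cV[C]_d) :
  (forall j, V j \is unitarymx) -> (forall j, unit_vec (x j)) ->
  braket 1%:M (tens_vec (fun j => V j *m x j)) (tens_vec (fun j => V j *m x j)) = 1.
Proof.
move=> V_unitary x_unit; rewrite braket1_tens_vec; apply: big1 => j _.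
by rewrite braket1_unitary // unit_vec_braket1.
Qed.

Lemma attack_fidelity_ge k (a : R) before (U : 'M[C]_(2 ^ k)) x : (0 < k)%N ->
  U \is unitarymx -> unit_vec x ->
  cos (a / 2) ^+ 2 <= sqnormc (braket 1%:M (U *m x) (attacked before (Aphase k a) U *m x)).
Proof.
move=> k_gt0 U_unitary /unit_vec_braket1 x1; rewrite /attacked.
case: before; rewrite -mulmxA ?braket1_unitary //; apply: Aphase_fidelity_ge => //.
by rewrite braket1_unitary.
Qed.

Lemma acc_prob_bound d n (mu : 'M[C]_(d ^ n)) (U : 'I_n.+1 -> 'M[C]_d)
    (chi : 'I_n.+1 -> 'cV[C]_d) l :
  effect mu -> (forall i, U i \is unitarymx) -> (forall i, unit_vec (chi i)) ->
  0 <= acc_prob mu U chi l <= 1.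
Proof.
move=> [mu_psd mu1_psd] U_unitary chi_unit; rewrite acc_prob_braket /=.
set psi := tens_vec _; have := psd_Re_braket_ge0 psi mu1_psd.
rewrite braket1B tens_vec_unit // ReB -[Re 1]/1.
by rewrite psd_Re_braket_ge0 //= subr_ge0.
Qed.

Lemma acc_prob_attack_gap_le k n (mu : 'M[C]_((2 ^ k) ^ n))
    (T : 'I_n.+1 -> 'M[C]_(2 ^ k)) (chi : 'I_n.+1 -> 'cV[C]_(2 ^ k)) a before l :
  (0 < k)%N -> effect mu -> (forall i, T i \is unitarymx) ->
  (forall i, unit_vec (chi i)) ->
  `|acc_prob mu T chi l -
    acc_prob mu (fun i => attacked before (Aphase k a) (T i)) chi l|
    <= Num.sqrt (1 - cos (a / 2) ^+ 2 ^+ n).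
Proof.
move=> k_gt0 mu_eff T_unitary chi_unit; rewrite !acc_prob_braket /=.
have TA_unitary i : attacked before (Aphase k a) (T i) \is unitarymx.
  exact: attacked_unitary.
apply: le_trans (effect_gap_le mu_eff (tens_vec_unit _ _) (tens_vec_unit _ _)) _ => //.
have c2_ge0 : 0 <= cos (a / 2) ^+ 2 := sqr_ge0 _.
have cn_le1 : cos (a / 2) ^+ 2 ^+ n <= 1 by rewrite exprn_ile1 // cos2sin2 gerBl sqr_ge0.
rewrite ler_sqrt ?subr_ge0 // lerD2l lerN2 braket1_tens_vec.
rewrite (big_morph sqnormc sqnormcM sqnormc1) -[in leLHS](card_ord n) -prodr_const.
by apply: ler_prod => j _; rewrite c2_ge0 attack_fidelity_ge.
Qed.

Lemma round_average_bound (w : R) n (f : 'I_n.+1 -> R) : 0 <= w ->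
  (forall l, 0 <= f l <= 1) -> 0 <= w / n.+1%:R * \sum_l f l <= w.
Proof.
move=> w0 f01; have /all_and2[f_ge0 f_le1] l : 0 <= f l /\ f l <= 1 by apply/andP.
have n_gt0 : 0 < n.+1%:R :> R by rewrite ltr0n.
have sum_le : \sum_l f l <= n.+1%:R.
  by apply: le_trans (ler_sum _ (fun l _ => f_le1 l)) _; rewrite sumr_const card_ord.
have sum_ge0 : 0 <= \sum_l f l by apply: sumr_ge0 => l _; apply: f_ge0.
apply/andP; split; first by rewrite mulr_ge0 // divr_ge0 // ler0n.
by rewrite mulrAC ler_pdivrMr // ler_wpM2l.
Qed.

Lemma round_average_gap_le (w s : R) n (f g : 'I_n.+1 -> R) : 0 <= w ->
  (forall l, `|f l - g l| <= s) ->
  `|w / n.+1%:R * \sum_l f l - w / n.+1%:R * \sum_l g l| <= w * s.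
Proof.
move=> w0 fg; have n_gt0 : 0 < n.+1%:R :> R by rewrite ltr0n.
rewrite -mulrBr -sumrB normrM ger0_norm ?divr_ge0 ?ler0n //.
rewrite mulrAC ler_pdivrMr // -mulrA ler_wpM2l //.
apply: le_trans (ler_norm_sum _ _ _) _; apply: le_trans (ler_sum _ (fun l _ => fg l)) _.
by rewrite sumr_const card_ord mulr_natr.
Qed.

End AcceptanceGap.

Theorem mainTheorem1 (R : realType) (k : nat) (hk : (0 < k)%N)
  (Omega : nat -> R)
  (T : forall n : nat, 'I_n.+1 -> 'M[R[i]]_(2 ^ k))
  (chi : forall n : nat, 'I_n.+1 -> 'cV[R[i]]_(2 ^ k))
  (mu : forall n : nat, 'M[R[i]]_((2 ^ k) ^ n))
  (alpha : R) (before : bool) :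
  (forall n, 0 <= Omega n) ->
  series Omega @ \oo --> (1 : R) ->
  cvgn (series ((fun n => n%:R * Omega n) : R^nat)) ->
  (forall n i, T n i \is unitarymx) ->
  (forall n i, unit_vec (chi n i)) ->
  (forall n, effect (mu n)) ->
  let N := limn (series ((fun n => n%:R * Omega n) : R^nat)) in
  let pH := overall_prob Omega
              (fun n l => acc_prob (mu n) (T n) (chi n) l) in
  let pD := overall_prob Omega
              (fun n l => acc_prob (mu n)
                 (fun i => attacked before (Aphase k alpha) (T n i)) (chi n) l) in
  `|pH - pD| <= Num.sqrt (1 - (cos (alpha / 2) ^+ 2) `^ N).
Proof.
move=> Omega_ge0 Omega1 N_cvg T_unitary chi_unit mu_eff /=; rewrite /overall_prob.
apply: lim_series_gap_le => // [|n|n|n].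
- by rewrite sqr_ge0 cos2sin2 gerBl sqr_ge0.
- by apply: round_average_bound => // l; apply: acc_prob_bound.
- apply: round_average_bound => // l; apply: acc_prob_bound => // i.
  exact: attacked_unitary.
- by apply: round_average_gap_le => // l; apply: acc_prob_attack_gap_le.
Qed.
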